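(* Let $M\subset\mathbb R^2$ be open with coordinates $x=(x^1,x^2)$, let $\lambda_1,\lambda_2$ be smooth functions on $M$, and let $f(x,y)$ be a smooth function on $\mathcal TM$ positively homogeneous of degree 2 in $y=(y^1,y^2)$. Consider the spray of the system $\ddot x^1=\lambda_1(x)f(x,\dot x)$, $\ddot x^2=\lambda_2(x)f(x,\dot x)$. On any open set $U\subset\mathcal TM$ on which $(\lambda_1,\lambda_2)$ does not vanish and the third partial derivatives $\frac{\partial^3 f}{\partial y^i\partial y^j\partial y^k}$ do not all vanish at any point (i.e. $f$ is non-quadratic there), this spray is not Landsberg metrizable.
   Context: For a spray $S=y^i\frac{\partial}{\partial x^i}+f^i(x,y)\frac{\partial}{\partial y^i}$ (here $f^1=\lambda_1f$, $f^2=\lambda_2f$), put $\Gamma^i_j=-\frac12\frac{\partial f^i}{\partial y^j}$, $\Gamma^i_{jk}=\frac{\partial\Gamma^i_j}{\partial y^k}$. For $E$ smooth on $U$, $g_{ij}=\frac{\partial^2E}{\partial y^i\partial y^j}$. $S$ is Landsberg metrizable on $U$ if there is a smooth $E:U\to\mathbb R$ with $(g_{ij})$ positive definite satisfying (H) $y^i\frac{\partial E}{\partial y^i}-2E=0$, (EL) $y^j\frac{\partial^2E}{\partial x^j\partial y^i}+f^j\frac{\partial^2E}{\partial y^j\partial y^i}-\frac{\partial E}{\partial x^i}=0$ ($i=1,2$), and (Ls) $\frac{\partial g_{jk}}{\partial x^i}-\Gamma^l_i\frac{\partial g_{jk}}{\partial y^l}-\Gamma^l_{ik}g_{lj}-\Gamma^l_{ij}g_{lk}=0$.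 *)

From Stdlib Require Import Reals List.
From Coquelicot Require Import Coquelicot.
Open Scope R_scope.

Inductive ix := i1 | i2.

(** Points of TM (M open in R^2): ((x^1,x^2),(y^1,y^2)). *)
Definition pt : Type := ((R * R) * (R * R))%type.

Inductive dir := X (i : ix) | Y (i : ix).

Definition c2 (v : R * R) (i : ix) : R :=
  match i with i1 => fst v | i2 => snd v end.
Definition u2 (v : R * R) (i : ix) (t : R) : R * R :=
  match i with i1 => (t, snd v) | i2 => (fst v, t) end.

Definition coord (p : pt) (d : dir) : R :=
  match d with X i => c2 (fst p) i | Y i => c2 (snd p) i end.
Definition upd (p : pt) (d : dir) (t : R) : pt :=
  match d with X i => (u2 (fst p) i t, snd p) | Y i => (fst p, u2 (snd p) i t) end.

Definition xc (i : ix) (p : pt) : R := coord p (X i).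
Definition yc (i : ix) (p : pt) : R := coord p (Y i).

Definition partial (d : dir) (F : pt -> R) (p : pt) : R :=
  Derive (fun t => F (upd p d t)) (coord p d).

Definition pders (l : list dir) (F : pt -> R) : pt -> R :=
  fold_right partial F l.

Definition smooth_on (U : pt -> Prop) (F : pt -> R) : Prop :=
  forall (l : list dir) (p : pt), U p ->
    (forall d, ex_derive (fun t => pders l F (upd p d t)) (coord p d)) /\
    continuous (pders l F) p.

Definition partial2 (i : ix) (g : R * R -> R) (x : R * R) : R :=
  Derive (fun t => g (u2 x i t)) (c2 x i).
Definition pders2 (l : list ix) (g : R * R -> R) : R * R -> R :=
  fold_right partial2 g l.
Definition smooth_on2 (M : R * R -> Prop) (g : R * R -> R) : Prop :=
  forall (l : list ix) (x : R * R), M x ->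
    (forall i, ex_derive (fun t => pders2 l g (u2 x i t)) (c2 x i)) /\
    continuous (pders2 l g) x.

(** Slit tangent bundle  𝒯M = M x (R^2 \ {0}). *)
Definition slitTM (M : R * R -> Prop) (p : pt) : Prop :=
  M (fst p) /\ snd p <> (0, 0).

Definition pos_homog2 (M : R * R -> Prop) (f : pt -> R) : Prop :=
  forall x y t, M x -> y <> (0, 0) -> 0 < t ->
    f (x, (t * fst y, t * snd y)) = t ^ 2 * f (x, y).

Definition sum2 (g : ix -> R) : R := g i1 + g i2.

(** The spray  S = y^i d/dx^i + f^i d/dy^i  with f^i = lambda_i f. *)
Definition lamv (lam1 lam2 : R * R -> R) (i : ix) : R * R -> R :=
  match i with i1 => lam1 | i2 => lam2 end.
Definition fsp (lam1 lam2 : R * R -> R) (f : pt -> R) (i : ix) (p : pt) : R :=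
  lamv lam1 lam2 i (fst p) * f p.

Definition Gam1 lam1 lam2 f (i j : ix) (p : pt) : R :=
  - / 2 * partial (Y j) (fsp lam1 lam2 f i) p.
Definition Gam2 lam1 lam2 f (i j k : ix) (p : pt) : R :=
  partial (Y k) (Gam1 lam1 lam2 f i j) p.

Definition gmet (E : pt -> R) (i j : ix) (p : pt) : R :=
  partial (Y i) (partial (Y j) E) p.

Definition posdef_at (E : pt -> R) (p : pt) : Prop :=
  forall v : ix -> R, (v i1, v i2) <> (0, 0) ->
    0 < sum2 (fun j => sum2 (fun k => gmet E j k p * v j * v k)).

Definition cond_H (E : pt -> R) (p : pt) : Prop :=
  sum2 (fun i => yc i p * partial (Y i) E p) - 2 * E p = 0.

Definition cond_EL lam1 lam2 f (E : pt -> R) (p : pt) : Prop :=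
  forall i : ix,
    sum2 (fun j => yc j p * partial (X j) (partial (Y i) E) p)
    + sum2 (fun j => fsp lam1 lam2 f j p * partial (Y j) (partial (Y i) E) p)
    - partial (X i) E p = 0.

Definition cond_Ls lam1 lam2 f (E : pt -> R) (p : pt) : Prop :=
  forall i j k : ix,
    partial (X i) (fun q => gmet E j k q) p
    - sum2 (fun l => Gam1 lam1 lam2 f l i p * partial (Y l) (fun q => gmet E j k q) p)
    - sum2 (fun l => Gam2 lam1 lam2 f l i k p * gmet E l j p)
    - sum2 (fun l => Gam2 lam1 lam2 f l i j p * gmet E l k p) = 0.

Definition landsberg_metrizable lam1 lam2 f (U : pt -> Prop) : Prop :=
  exists E : pt -> R, smooth_on U E /\
    forall p, U p ->
      posdef_at E p /\ cond_H E p /\ cond_EL lam1 lam2 f E p /\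
      cond_Ls lam1 lam2 f E p.

(* With [w_J := lam^l d_J d_{y^l} E] and [Gamma^l_i = - lam_l f_i / 2], condition (Ls) reads
   [d_{x^i} g_jk + (f_i w_jk + f_ik w_j + f_ij w_k) / 2 = 0].  Differentiating in [y^m] and
   antisymmetrising in [(k, m)] leaves [f_ijm w_k = f_ijk w_m]: the vector [(f_ij1, f_ij2)] is
   parallel to [(w_1, w_2)].  By Euler's relation for the 0-homogeneous [f_ij] it is orthogonal
   to [y], while (H) gives [y^k w_k = w].  Where [f] is not quadratic some [f_ij.] is nonzero,
   so [w = lam^l E_l] vanishes on [U]; one more [y]-derivative gives [g (lam, .) = 0], which
   contradicts positive definiteness since [lam <> 0]. *)

From Stdlib Require Import Reals Lra List Permutation.
From Coquelicot Require Import Coquelicot.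
Import ListNotations.
Open Scope R_scope.

Definition dir_eq_dec (d e : dir) : {d = e} + {d <> e}.
Proof. decide equality; decide equality. Defined.

Ltac destruct_coords := repeat match goal with
  | d : dir |- _ => destruct d as [[]|[]]
  | i : ix |- _ => destruct i
  | p : pt |- _ => destruct p as [[? ?] [? ?]]
  end.

Lemma coord_upd_same q d t : coord (upd q d t) d = t.
Proof. destruct_coords; reflexivity. Qed.

Lemma coord_upd_other q d e t : d <> e -> coord (upd q d t) e = coord q e.
Proof. intros; destruct_coords; try reflexivity; congruence. Qed.

Lemma upd_upd_same q d s t : upd (upd q d s) d t = upd q d t.
Proof. destruct_coords; reflexivity. Qed.

Lemma upd_upd_comm q d e s t : d <> e -> upd (upd q d s) e t = upd (upd q e t) d s.
Proof. intros; destruct_coords; try reflexivity; congruence. Qed.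

Lemma upd_coord q d : upd q d (coord q d) = q.
Proof. destruct_coords; reflexivity. Qed.

Lemma ball_pt (p q : pt) (e : R) :
  Rabs (fst (fst q) - fst (fst p)) < e -> Rabs (snd (fst q) - snd (fst p)) < e ->
  Rabs (fst (snd q) - fst (snd p)) < e -> Rabs (snd (snd q) - snd (snd p)) < e ->
  ball p e q.
Proof.
  destruct p as [[a b] [c d]], q as [[a' b'] [c' d']]; simpl; intros.
  split; split; assumption.
Qed.

Lemma locally_2d_upd (P : pt -> Prop) p a b : locally p P ->
  locally_2d (fun u v => P (upd (upd p a u) b v)) (coord p a) (coord p b).
Proof.
  intros [e He]. exists e. intros u v Hu Hv. apply He, ball_pt;
    destruct_coords; simpl in *;
    try (rewrite Rminus_diag, Rabs_R0; apply cond_pos); assumption.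
Qed.

Lemma locally_upd (P : pt -> Prop) p d : locally p P ->
  locally (coord p d) (fun t => P (upd p d t)).
Proof.
  intros HP. destruct (locally_2d_upd P p d d HP) as [e He].
  exists e. intros t Ht. rewrite <- (upd_upd_same p d t t).
  apply He; exact Ht.
Qed.

Lemma continuity_2d_upd (H : pt -> R) p a b : continuous H p ->
  continuity_2d_pt (fun u v => H (upd (upd p a u) b v)) (coord p a) (coord p b).
Proof.
  intros Hc eps.
  assert (Hl : locally_2d (fun u v => ball (H p) eps (H (upd (upd p a u) b v)))
                  (coord p a) (coord p b)).
  { apply (locally_2d_upd (fun q => ball (H p) eps (H q))), Hc, locally_ball. }
  destruct Hl as [e He].
  exists e. intros u v Hu Hv. rewrite !upd_coord. exact (He u v Hu Hv).
Qed.

Definition diff_along (p : pt) (d : dir) (F : pt -> R) : Prop :=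
  ex_derive (fun t => F (upd p d t)) (coord p d).

Lemma partial_ext_on U F G d p : open U ->
  (forall q, U q -> F q = G q) -> U p -> partial d F p = partial d G p.
Proof.
  intros HU HFG Hp. apply Derive_ext_loc.
  eapply filter_imp; [|apply (locally_upd U p d (HU p Hp))]. intros t. apply HFG.
Qed.

Lemma partial_ext F G d p : (forall q, F q = G q) -> partial d F p = partial d G p.
Proof. intros HFG. apply Derive_ext. intro; apply HFG. Qed.

Lemma partial_const d c p : partial d (fun _ => c) p = 0.
Proof. unfold partial. apply Derive_const. Qed.

Lemma partial_plus d F G p : diff_along p d F -> diff_along p d G ->
  partial d (fun q => F q + G q) p = partial d F p + partial d G p.
Proof. unfold partial. apply Derive_plus. Qed.

Lemma partial_mult d F G p : diff_along p d F -> diff_along p d G ->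
  partial d (fun q => F q * G q) p = partial d F p * G p + F p * partial d G p.
Proof.
  intros HF HG. unfold partial. rewrite Derive_mult by assumption. rewrite upd_coord. reflexivity.
Qed.

Lemma partial_scal d c F p : partial d (fun q => c * F q) p = c * partial d F p.
Proof. unfold partial. apply Derive_scal. Qed.

Lemma partial_coord_same d p : partial d (fun q => coord q d) p = 1.
Proof.
  unfold partial. rewrite (Derive_ext _ (fun t => t)) by (intro; apply coord_upd_same).
  apply Derive_id.
Qed.

Lemma partial_coord_other d e p : d <> e -> partial d (fun q => coord q e) p = 0.
Proof.
  intros Hde. unfold partial.
  rewrite (Derive_ext _ (fun _ => coord p e)) by (intro; apply coord_upd_other, Hde).
  apply Derive_const.
Qed.

Lemma diff_along_plus p d F G : diff_along p d F -> diff_along p d G ->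
  diff_along p d (fun q => F q + G q).
Proof. exact (ex_derive_plus _ _ _). Qed.

Lemma diff_along_mult p d F G : diff_along p d F -> diff_along p d G ->
  diff_along p d (fun q => F q * G q).
Proof. exact (ex_derive_mult _ _ _). Qed.

Lemma diff_along_scal p d c F : diff_along p d F -> diff_along p d (fun q => c * F q).
Proof. exact (ex_derive_scal _ _ _). Qed.

Lemma diff_along_Y_base p i (c : R * R -> R) : diff_along p (Y i) (fun q => c (fst q)).
Proof. exact (ex_derive_const (c (fst p)) _). Qed.

Lemma diff_along_coord p d e : diff_along p d (fun q => coord q e).
Proof.
  unfold diff_along. destruct (dir_eq_dec d e) as [<-|Hde].
  - eapply ex_derive_ext; [intro; symmetry; apply coord_upd_same|]. apply ex_derive_id.
  - eapply ex_derive_ext; [intro; symmetry; apply coord_upd_other, Hde|]. apply ex_derive_const.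
Qed.

Lemma diff_along_pders U F l p d : smooth_on U F -> U p -> diff_along p d (pders l F).
Proof. intros HF Hp. exact (proj1 (HF l p Hp) d). Qed.

Lemma partial_pders d l F : partial d (pders l F) = pders (d :: l) F.
Proof. reflexivity. Qed.

Lemma partial_Y_scal_base i (c : R * R -> R) F p :
  partial (Y i) (fun q => c (fst q) * F q) p = c (fst p) * partial (Y i) F p.
Proof. exact (Derive_scal (fun t => F (upd p (Y i) t)) (c (fst p)) _). Qed.

Create HintDb diff_along.
#[export] Hint Resolve diff_along_plus diff_along_mult diff_along_scal diff_along_Y_base
  diff_along_coord : diff_along.
#[export] Hint Extern 1 (diff_along _ _ (pders _ _)) =>
  eapply diff_along_pders; eassumption : diff_along.

Section Symmetry.
Variables (U : pt -> Prop) (F : pt -> R).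
Hypothesis HU : open U.
Hypothesis HF : smooth_on U F.

Section Plane.
Variables (p : pt) (a b : dir).
Hypothesis Hab : a <> b.
Let r u v := upd (upd p a u) b v.

Lemma partial_plane_fst l u v :
  pders (a :: l) F (r u v) = Derive (fun z => pders l F (r z v)) u.
Proof.
  unfold r; simpl; unfold partial. rewrite coord_upd_other, coord_upd_same by congruence.
  apply Derive_ext. intro z.
  rewrite upd_upd_comm, upd_upd_same, upd_upd_comm by congruence. reflexivity.
Qed.

Lemma partial_plane_snd l u v :
  pders (b :: l) F (r u v) = Derive (fun z => pders l F (r u z)) v.
Proof.
  unfold r; simpl; unfold partial. rewrite coord_upd_same.
  apply Derive_ext. intro z. rewrite upd_upd_same. reflexivity.
Qed.

Lemma ex_derive_plane_fst l u v : U (r u v) ->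
  ex_derive (fun z => pders l F (r z v)) u.
Proof.
  intros Hr. pose proof (diff_along_pders U F l (r u v) a HF Hr) as D. unfold diff_along in D.
  unfold r in *. rewrite coord_upd_other, coord_upd_same in D by congruence.
  eapply ex_derive_ext; [|exact D]. intro z. simpl.
  rewrite upd_upd_comm, upd_upd_same, upd_upd_comm by congruence. reflexivity.
Qed.

Lemma ex_derive_plane_snd l u v : U (r u v) ->
  ex_derive (fun z => pders l F (r u z)) v.
Proof.
  intros Hr. pose proof (diff_along_pders U F l (r u v) b HF Hr) as D. unfold diff_along in D.
  unfold r in *. rewrite coord_upd_same in D.
  eapply ex_derive_ext; [|exact D]. intro z. simpl. rewrite upd_upd_same. reflexivity.
Qed.

Lemma pders_swap_plane l : U p -> pders (a :: b :: l) F p = pders (b :: a :: l) F p.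
Proof.
  intros Hp. set (g := fun u v => pders l F (r u v)).
  assert (Eab : forall u v, pders (a :: b :: l) F (r u v)
     = Derive (fun z => Derive (fun t => g z t) v) u).
  { intros u v. rewrite partial_plane_fst.
    apply Derive_ext. intro z. apply partial_plane_snd. }
  assert (Eba : forall u v, pders (b :: a :: l) F (r u v)
     = Derive (fun z => Derive (fun t => g t z) u) v).
  { intros u v. rewrite partial_plane_snd.
    apply Derive_ext. intro z. apply partial_plane_fst. }
  assert (Hr : r (coord p a) (coord p b) = p) by (unfold r; rewrite !upd_coord; reflexivity).
  rewrite <- Hr, Eab, Eba.
  apply Schwarz.
  - eapply locally_2d_impl; [|apply (locally_2d_upd U p a b (HU p Hp))].
    apply locally_2d_forall. intros u v Huv. fold (r u v) in Huv.
    repeat split.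
    + apply ex_derive_plane_fst; exact Huv.
    + apply ex_derive_plane_snd; exact Huv.
    + eapply ex_derive_ext; [intro z; apply partial_plane_snd|].
      apply ex_derive_plane_fst; exact Huv.
    + eapply ex_derive_ext; [intro z; apply partial_plane_fst|].
      apply ex_derive_plane_snd; exact Huv.
  - eapply continuity_2d_pt_ext; [intros; apply Eab|].
    apply continuity_2d_upd, (HF _ p Hp).
  - eapply continuity_2d_pt_ext; [intros; apply Eba|].
    apply continuity_2d_upd, (HF _ p Hp).
Qed.

End Plane.

Lemma pders_swap l a b p : U p -> pders (a :: b :: l) F p = pders (b :: a :: l) F p.
Proof.
  destruct (dir_eq_dec a b) as [<-|Hab]; [reflexivity|].
  apply pders_swap_plane; exact Hab.
Qed.

Lemma pders_perm l l' : Permutation l l' -> forall q, U q -> pders l F q = pders l' F q.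
Proof.
  induction 1; intros q Hq.
  - reflexivity.
  - simpl. unfold partial. apply Derive_ext_loc.
    eapply filter_imp; [|apply (locally_upd U q x (HU q Hq))].
    intros t Ht. apply IHPermutation. exact Ht.
  - apply pders_swap. exact Hq.
  - rewrite IHPermutation1, IHPermutation2 by exact Hq. reflexivity.
Qed.

End Symmetry.

Definition dir_rank (d : dir) : nat :=
  match d with X i1 => 0 | X i2 => 1 | Y i1 => 2 | Y i2 => 3 end.

Fixpoint dir_insert (a : dir) (l : list dir) : list dir :=
  match l with
  | [] => [a]
  | b :: l' => if Nat.leb (dir_rank a) (dir_rank b) then a :: l else b :: dir_insert a l'
  end.

Fixpoint dir_sort (l : list dir) : list dir :=
  match l with [] => [] | a :: l' => dir_insert a (dir_sort l') end.

Lemma dir_insert_perm a l : Permutation (a :: l) (dir_insert a l).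
Proof.
  induction l as [|b l IH]; simpl; [reflexivity|].
  destruct (Nat.leb (dir_rank a) (dir_rank b)); [reflexivity|].
  rewrite perm_swap. apply perm_skip, IH.
Qed.

Lemma dir_sort_perm l : Permutation l (dir_sort l).
Proof.
  induction l as [|a l IH]; simpl; [reflexivity|].
  rewrite <- dir_insert_perm. apply perm_skip, IH.
Qed.

(* A copy of [pders] marking normalised derivatives, so that rewriting terminates. *)
Definition pders_sorted : list dir -> (pt -> R) -> pt -> R := pders.

Lemma pders_sortE U F l q : open U -> smooth_on U F -> U q ->
  pders l F q = pders_sorted (dir_sort l) F q.
Proof. intros HU HF Hq. apply (pders_perm U F HU HF), Hq. apply dir_sort_perm. Qed.

Ltac sort_pders U F q :=
  repeat match goal with
  | H : context [pders ?l F q] |- _ => rewrite (pders_sortE U F l q) in H by assumption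
  | |- context [pders ?l F q] => rewrite (pders_sortE U F l q) by assumption
  end;
  cbn [dir_sort dir_insert dir_rank Nat.leb] in *.

Section EulerRelation.
Variables (U : pt -> Prop) (F : pt -> R) (l : list dir) (n : R).
Hypothesis HU : open U.
Hypothesis HF : smooth_on U F.
Hypothesis Heuler : forall q, U q ->
  sum2 (fun a => yc a q * pders (Y a :: l) F q) = n * pders l F q.

Lemma euler_relation_partial m q : U q ->
  sum2 (fun a => yc a q * pders (Y a :: Y m :: l) F q) = (n - 1) * pders (Y m :: l) F q.
Proof.
  intros Hq.
  pose proof (partial_ext_on U _ _ (Y m) q HU Heuler Hq) as D.
  unfold sum2, yc in *.
  rewrite partial_plus, !partial_mult, partial_scal, !partial_pders in D
    by auto with diff_along.
  rewrite (pders_swap U F HU HF l (Y i1) (Y m) q Hq), (pders_swap U F HU HF l (Y i2) (Y m) q Hq).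
  destruct m; rewrite partial_coord_same, partial_coord_other in D by discriminate; lra.
Qed.
End EulerRelation.

Definition homogeneous_y (M : R * R -> Prop) (n : nat) (F : pt -> R) : Prop :=
  forall x y t, M x -> y <> (0, 0) -> 0 < t ->
    F (x, (t * fst y, t * snd y)) = t ^ n * F (x, y).

Definition ix_other (a : ix) : ix := match a with i1 => i2 | i2 => i1 end.

Lemma sum2_other g a : sum2 g = g a + g (ix_other a).
Proof. destruct a; unfold sum2; simpl; ring. Qed.

Lemma nonzero_component (y : R * R) : y <> (0, 0) -> exists a, c2 y a <> 0.
Proof.
  destruct y as [y1 y2]. intros Hy.
  destruct (Req_dec y1 0) as [->|H1]; [|now exists i1].
  destruct (Req_dec y2 0) as [->|H2]; [congruence|now exists i2].
Qed.

Lemma locally_same_sign (c : R) : c <> 0 -> locally c (fun s => 0 < c / s).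
Proof.
  intros Hc. assert (He : 0 < Rabs c) by now apply Rabs_pos_lt.
  exists (mkposreal _ He). intros s Hs. change (Rabs (s - c) < Rabs c) in Hs.
  destruct (Rlt_or_le 0 c) as [Hp|Hn].
  - rewrite (Rabs_pos_eq c) in Hs by lra. apply Rabs_def2 in Hs as [Hs1 Hs2].
    apply Rdiv_lt_0_compat; lra.
  - rewrite (Rabs_left1 c) in Hs by lra. apply Rabs_def2 in Hs as [Hs1 Hs2].
    replace (c / s) with ((- c) / (- s)) by (field; lra). apply Rdiv_lt_0_compat; lra.
Qed.

Lemma u2_rescale y a s : c2 y a <> 0 -> s <> 0 ->
  let v := u2 y (ix_other a) (c2 y (ix_other a) * c2 y a / s) in
  u2 y a s = (s / c2 y a * fst v, s / c2 y a * snd v).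
Proof. destruct a, y; simpl; intros; f_equal; field; auto. Qed.

Lemma c2_u2_other y a z : c2 (u2 y (ix_other a) z) a = c2 y a.
Proof. destruct a; reflexivity. Qed.

Lemma u2_c2 y i : u2 y i (c2 y i) = y.
Proof. destruct y, i; reflexivity. Qed.

(* Near [s = y_a], [F (x, y with y_a := s) = (s / y_a) ^ n * F (x, y with y_b := y_b y_a / s)],
   so Euler's relation follows from the one-variable chain rule. *)
Lemma euler_homogeneous M n F x y : homogeneous_y M n F -> M x -> y <> (0, 0) ->
  (forall i, diff_along (x, y) (Y i) F) ->
  sum2 (fun a => yc a (x, y) * pders [Y a] F (x, y)) = INR n * F (x, y).
Proof.
  intros Hhom Hx Hy HF.
  destruct (nonzero_component y Hy) as [a Ha].
  pose (G := fun z => F (x, u2 y (ix_other a) z)).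
  assert (Hloc : locally (c2 y a) (fun s => F (x, u2 y a s)
                   = (s / c2 y a) ^ n * G (c2 y (ix_other a) * c2 y a / s))).
  { eapply filter_imp; [|apply (locally_same_sign _ Ha)]. intros s Hs.
    assert (s <> 0) by (intros ->; unfold Rdiv in Hs; rewrite Rinv_0, Rmult_0_r in Hs; lra).
    rewrite (u2_rescale y a s Ha) by assumption. apply Hhom; [exact Hx| |].
    - intro E. apply Ha. rewrite <- (c2_u2_other y a (c2 y (ix_other a) * c2 y a / s)), E.
      destruct a; reflexivity.
    - replace (s / c2 y a) with (/ (c2 y a / s)) by (field; split; assumption).
      apply Rinv_0_lt_compat, Hs. }
  assert (HG : ex_derive G (c2 y (ix_other a))) by exact (HF (ix_other a)).
  assert (Hd : is_derive (fun s => (s / c2 y a) ^ n * G (c2 y (ix_other a) * c2 y a / s)) (c2 y a)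
                 (INR n / c2 y a * G (c2 y (ix_other a))
                  - c2 y (ix_other a) / c2 y a * Derive G (c2 y (ix_other a)))).
  { auto_derive; replace (c2 y (ix_other a) * c2 y a * / c2 y a) with (c2 y (ix_other a))
      by (field; exact Ha).
    - split; [exact HG|split; [exact Ha|trivial]].
    - rewrite Rinv_r, !pow1 by exact Ha. change (fun z => G z) with G. field. exact Ha. }
  assert (Ha' : pders [Y a] F (x, y) = INR n / c2 y a * F (x, y)
                 - c2 y (ix_other a) / c2 y a * pders [Y (ix_other a)] F (x, y)).
  { change (pders [Y a] F (x, y)) with (Derive (fun s => F (x, u2 y a s)) (c2 y a)).
    rewrite (Derive_ext_loc (fun s : R => F (x, u2 y a s)) _ _ Hloc).
    erewrite is_derive_unique by exact Hd.
    unfold G. rewrite u2_c2. reflexivity. }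
  rewrite (sum2_other _ a), Ha'. unfold yc. simpl coord. field. exact Ha.
Qed.

Lemma euler_of_cond_H E q : cond_H E q ->
  sum2 (fun a => yc a q * pders [Y a] E q) = 2 * E q.
Proof. unfold cond_H. change (pders [Y ?a] E q) with (partial (Y a) E q). lra. Qed.

Lemma orthogonal_of_parallel_orthogonal A1 A2 y1 y2 w1 w2 :
  (A1, A2) <> (0, 0) -> A1 * y1 + A2 * y2 = 0 -> A2 * w1 = A1 * w2 ->
  y1 * w1 + y2 * w2 = 0.
Proof.
  intros HA Hy Hw.
  assert (E1 : A1 * (y1 * w1 + y2 * w2) = 0).
  { transitivity (w1 * (A1 * y1 + A2 * y2) + y2 * (A1 * w2 - A2 * w1)); [ring|].
    rewrite Hy, Hw. ring. }
  assert (E2 : A2 * (y1 * w1 + y2 * w2) = 0).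
  { transitivity (w2 * (A1 * y1 + A2 * y2) + y1 * (A2 * w1 - A1 * w2)); [ring|].
    rewrite Hy, Hw. ring. }
  destruct (Req_dec A1 0) as [->|H1].
  - destruct (Req_dec A2 0) as [->|H2]; [congruence|].
    destruct (Rmult_integral _ _ E2); [contradiction|assumption].
  - destruct (Rmult_integral _ _ E1); [contradiction|assumption].
Qed.

Lemma gmet_pders E i j q : gmet E i j q = pders [Y i; Y j] E q.
Proof. reflexivity. Qed.

Section Landsberg.
Variables (lam1 lam2 : R * R -> R) (f E : pt -> R) (U : pt -> Prop).
Hypothesis HU : open U.
Hypothesis Hf : smooth_on U f.
Hypothesis HE : smooth_on U E.
Hypothesis HLs : forall q, U q -> cond_Ls lam1 lam2 f E q.

Definition lam_dE (J : list dir) (q : pt) : R :=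
  sum2 (fun l => lamv lam1 lam2 l (fst q) * pders (J ++ [Y l]) E q).

Lemma diff_along_lam_dE J q m : U q -> diff_along q (Y m) (lam_dE J).
Proof. intros Hq. unfold lam_dE, sum2. auto with diff_along. Qed.

Lemma partial_lam_dE J m q : U q -> partial (Y m) (lam_dE J) q = lam_dE (Y m :: J) q.
Proof.
  intros Hq. unfold lam_dE, sum2.
  rewrite partial_plus, !partial_Y_scal_base by auto with diff_along. reflexivity.
Qed.

Lemma Gam1_eq l i q :
  Gam1 lam1 lam2 f l i q = - / 2 * (lamv lam1 lam2 l (fst q) * pders [Y i] f q).
Proof. unfold Gam1, fsp. rewrite partial_Y_scal_base. reflexivity. Qed.

Lemma Gam2_eq l i k q :
  Gam2 lam1 lam2 f l i k q = - / 2 * (lamv lam1 lam2 l (fst q) * pders [Y k; Y i] f q).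
Proof.
  unfold Gam2.
  rewrite (partial_ext _ (fun q => - / 2 * (lamv lam1 lam2 l (fst q) * pders [Y i] f q)))
    by apply Gam1_eq.
  rewrite partial_scal, partial_Y_scal_base. reflexivity.
Qed.

Definition Ls_form (i j k : ix) (q : pt) : R :=
  pders [X i; Y j; Y k] E q
  + / 2 * (pders [Y i] f q * lam_dE [Y j; Y k] q + pders [Y k; Y i] f q * lam_dE [Y j] q
           + pders [Y j; Y i] f q * lam_dE [Y k] q).

Lemma Ls_form_eq0 i j k q : U q -> Ls_form i j k q = 0.
Proof.
  intros Hq. pose proof (HLs q Hq i j k) as L.
  unfold cond_Ls, sum2 in L. rewrite !Gam1_eq, !Gam2_eq in L.
  change (fun q => gmet E j k q) with (pders [Y j; Y k] E) in L.
  rewrite !gmet_pders, !partial_pders in L.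
  unfold Ls_form, lam_dE, sum2. simpl app.
  destruct i, j, k; sort_pders U E q; sort_pders U f q; lra.
Qed.

Lemma Ls_form_partial i j k m q : U q ->
  pders [Y m; X i; Y j; Y k] E q
  + / 2 * (pders [Y m; Y i] f q * lam_dE [Y j; Y k] q + pders [Y i] f q * lam_dE [Y m; Y j; Y k] q
           + pders [Y m; Y k; Y i] f q * lam_dE [Y j] q + pders [Y k; Y i] f q * lam_dE [Y m; Y j] q
           + pders [Y m; Y j; Y i] f q * lam_dE [Y k] q + pders [Y j; Y i] f q * lam_dE [Y m; Y k] q)
  = 0.
Proof.
  intros Hq.
  pose proof (partial_ext_on U (Ls_form i j k) (fun _ => 0) (Y m) q HU
                (fun r Hr => Ls_form_eq0 i j k r Hr) Hq) as D.
  rewrite partial_const in D. rewrite <- D. unfold Ls_form.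
  assert (Hl : forall J, diff_along q (Y m) (lam_dE J)) by (intro; apply diff_along_lam_dE, Hq).
  rewrite partial_plus, partial_scal, !partial_plus, !partial_mult, !partial_pders,
    !partial_lam_dE by auto with diff_along.
  ring.
Qed.

(* Antisymmetrising the y^m-derivative of (Ls) in (k, m) cancels every term but
   those with third derivatives of f. *)
Lemma Ls_wedge i j q : U q ->
  pders [Y i2; Y j; Y i] f q * lam_dE [Y i1] q = pders [Y i1; Y j; Y i] f q * lam_dE [Y i2] q.
Proof.
  intros Hq.
  pose proof (Ls_form_partial i j i1 i2 q Hq) as D12.
  pose proof (Ls_form_partial i j i2 i1 q Hq) as D21.
  unfold lam_dE, sum2 in *. simpl app in *.
  destruct i, j; sort_pders U E q; sort_pders U f q; lra.
Qed.

Hypothesis HH : forall q, U q -> cond_H E q.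
Hypothesis Hf_euler : forall q, U q -> sum2 (fun a => yc a q * pders [Y a] f q) = 2 * f q.
Hypothesis Hnq : forall q, U q -> exists a j i, pders [Y a; Y j; Y i] f q <> 0.

Lemma lam_dE_nil_eq0 q : U q -> lam_dE [] q = 0.
Proof.
  intros Hq. destruct (Hnq q Hq) as [a [j [i Ha]]].
  assert (Hf0 : sum2 (fun b => yc b q * pders [Y b; Y j; Y i] f q) = 0).
  { rewrite (euler_relation_partial U f [Y i] (2 - 1) HU Hf); [ring| |exact Hq].
    intros r Hr. exact (euler_relation_partial U f [] 2 HU Hf Hf_euler i r Hr). }
  assert (HE1 : forall l, sum2 (fun b => yc b q * pders [Y b; Y l] E q) = pders [Y l] E q).
  { intro l. rewrite (euler_relation_partial U E [] 2 HU HE); [ring| |exact Hq].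
    intros r Hr. apply euler_of_cond_H, HH, Hr. }
  pose proof (Ls_wedge i j q Hq) as Hw.
  assert (HW : lam_dE [] q = yc i1 q * lam_dE [Y i1] q + yc i2 q * lam_dE [Y i2] q).
  { unfold lam_dE, sum2. simpl app. rewrite <- (HE1 i1), <- (HE1 i2). unfold sum2. ring. }
  rewrite HW. unfold sum2 in Hf0.
  apply (orthogonal_of_parallel_orthogonal
           (pders [Y i1; Y j; Y i] f q) (pders [Y i2; Y j; Y i] f q)); [|lra|exact Hw].
  intro H0. injection H0 as H1 H2. destruct a; contradiction.
Qed.

Lemma lam_dE_Y_eq0 m q : U q -> lam_dE [Y m] q = 0.
Proof.
  intros Hq. rewrite <- (partial_lam_dE [] m q Hq).
  rewrite (partial_ext_on U _ (fun _ => 0) _ _ HU lam_dE_nil_eq0 Hq). apply partial_const.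
Qed.
End Landsberg.

Lemma posdef_lam_dE lam1 lam2 E p :
  posdef_at E p -> (lam1 (fst p), lam2 (fst p)) <> (0, 0) ->
  0 < sum2 (fun j => lamv lam1 lam2 j (fst p) * lam_dE lam1 lam2 E [Y j] p).
Proof.
  intros Hpd Hlam. specialize (Hpd (fun l => lamv lam1 lam2 l (fst p)) Hlam).
  unfold lam_dE, sum2 in *. rewrite !gmet_pders in Hpd. simpl app. lra.
Qed.

Theorem mainTheorem13
  (M : R * R -> Prop) (lam1 lam2 : R * R -> R) (f : pt -> R) (U : pt -> Prop)
  (HM : open M)
  (Hlam1 : smooth_on2 M lam1) (Hlam2 : smooth_on2 M lam2)
  (Hf : smooth_on (slitTM M) f)
  (Hhom : pos_homog2 M f)
  (HU : open U) (HUsub : forall p, U p -> slitTM M p)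
  (HUne : exists p, U p)
  (Hlam : forall p, U p -> (lam1 (fst p), lam2 (fst p)) <> (0, 0))
  (Hnq : forall p, U p -> exists i j k : ix,
      partial (Y i) (partial (Y j) (partial (Y k) f)) p <> 0) :
  ~ landsberg_metrizable lam1 lam2 f U.
Proof.
  intros [E [HE HP]]. destruct HUne as [p Hp].
  assert (HfU : smooth_on U f) by (intros l q Hq; apply Hf, HUsub, Hq).
  assert (Hf_euler : forall q, U q -> sum2 (fun a => yc a q * pders [Y a] f q) = 2 * f q).
  { intros [x y] Hq. destruct (HUsub _ Hq) as [Hx Hy].
    rewrite (euler_homogeneous M 2 f x y Hhom Hx Hy); [simpl; ring|].
    intro i. exact (diff_along_pders _ f [] _ _ Hf (conj Hx Hy)). }
  assert (Hw : forall m, lam_dE lam1 lam2 E [Y m] p = 0).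
  { intro m. apply (lam_dE_Y_eq0 lam1 lam2 f E U HU HfU HE); try assumption;
      intros q Hq; apply (HP q Hq). }
  pose proof (posdef_lam_dE lam1 lam2 E p (proj1 (HP p Hp)) (Hlam p Hp)) as Hpos.
  unfold sum2 in Hpos. rewrite !Hw in Hpos. lra.
Qed.
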